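(* Let $\mathbb{X},\mathbb{Y}$ be finite-dimensional real Banach spaces, $T\in\mathbb{L}(\mathbb{X},\mathbb{Y})$, and let $F$ be a face of $B_{\mathbb{X}}$ with $T(F)\neq\{0\}$. Then $T$ preserves TEA pairs contained in $F$ (i.e. $(Tx,Ty)$ is a TEA pair in $\mathbb{Y}$ for all $x,y\in F$) if and only if there exists $u\in F$ such that $J(Tu)\subset J(Tv)$ for all $v\in F\setminus\ker T$.
   Context: A face of $B_{\mathbb{X}}$ is a nonempty convex subset $F\subset S_{\mathbb{X}}$ such that whenever $x_1,x_2\in S_{\mathbb{X}}$, $0<t<1$ and $(1-t)x_1+tx_2\in F$, then $x_1,x_2\in F$. For non-zero $y$, $J(y)=\{g\in S_{\mathbb{Y}^*}: g(y)=\|y\|\}$. $(x,y)$ is a TEA pair if $\|x+y\|=\|x\|+\|y\|$. *)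

From HB Require Import structures.
From mathcomp Require Import all_boot all_order all_algebra.
From mathcomp Require Import all_classical all_reals all_analysis.
Set Implicit Arguments. Unset Strict Implicit. Unset Printing Implicit Defensive.
Import Order.TTheory GRing.Theory Num.Theory.
Import numFieldNormedType.Exports.
Local Open Scope ring_scope.
Local Open Scope classical_set_scope.

Definition finite_dim (R : realType) (X : normedModType R) : Prop :=
  exists n : nat, exists f : {linear 'rV[R]_n -> X}, bijective f.

Definition unit_sphere (R : realType) (X : normedModType R) : set X :=
  [set x | `|x| = 1].

Definition is_face (R : realType) (X : normedModType R) (F : set X) : Prop :=
  [/\ F !=set0,
      F `<=` @unit_sphere _ X,
      (forall x1 x2 t, F x1 -> F x2 -> 0 <= t <= 1 ->
          F ((1 - t) *: x1 + t *: x2)) &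
      (forall x1 x2 t, @unit_sphere _ X x1 -> @unit_sphere _ X x2 -> 0 < t < 1 ->
          F ((1 - t) *: x1 + t *: x2) -> F x1 /\ F x2)].

Definition TEA (R : realType) (X : normedModType R) (x y : X) : Prop :=
  `|x + y| = `|x| + `|y|.

Definition lin_functional (R : realType) (Y : normedModType R) (g : Y -> R) : Prop :=
  forall (a : R) (u v : Y), g (a *: u + v) = a * g u + g v.

Definition dual_unit_sphere (R : realType) (Y : normedModType R) : set (Y -> R) :=
  [set g | lin_functional g /\
           (forall z : Y, `|z| <= 1 -> `|g z| <= 1) /\
           (forall e : R, 0 < e -> exists z : Y, `|z| <= 1 /\ 1 - e < `|g z|)].

Definition J (R : realType) (Y : normedModType R) (y : Y) : set (Y -> R) :=
  [set g | @dual_unit_sphere _ Y g /\ g y = `|y|].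

(* If T preserves TEA pairs in F, choose finitely many points x_1, ..., x_k of
   F whose images span the linear span of T(F), which is possible since Y is
   finite-dimensional, and let u be their barycenter.  For v in F, writing
   Tv = sum_i c_i Tx_i gives Tu = e Tv + t Tz with e > 0, t >= 0 and z a
   convex combination of the x_i, hence in F.  Since (Tv, Tz) is a TEA pair,
   |Tu| = e |Tv| + t |Tz|, so every functional norming Tu also norms Tv.
   Conversely, a functional g in J(Tu), which exists by the finite-dimensional
   Hahn-Banach theorem (one-dimensional extensions), norms every Tv with v in
   F, whence |Tx + Ty| >= g (Tx + Ty) = |Tx| + |Ty|. *)

From HB Require Import structures.
From mathcomp Require Import all_boot all_order all_algebra.
From mathcomp Require Import all_classical all_reals all_analysis.
From mathcomp Require Import ring lra.
Import Order.TTheory GRing.Theory Num.Theory.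
Import numFieldNormedType.Exports.
Set Implicit Arguments. Unset Strict Implicit. Unset Printing Implicit Defensive.
Local Open Scope ring_scope.
Local Open Scope classical_set_scope.

Section LinearFunctional.
Variables (R : realType) (Y : normedModType R) (g : Y -> R).
Hypothesis lin_g : lin_functional g.

Lemma lin_functional0 : g 0 = 0.
Proof. by have := lin_g 1 0 0; rewrite scale1r addr0 mul1r; lra. Qed.

Lemma lin_functionalZ a u : g (a *: u) = a * g u.
Proof. by have := lin_g a u 0; rewrite addr0 lin_functional0 addr0. Qed.

Lemma lin_functionalD u v : g (u + v) = g u + g v.
Proof. by have := lin_g 1 u v; rewrite scale1r mul1r. Qed.

End LinearFunctional.

Section DualUnitSphere.
Variables (R : realType) (Y : normedModType R).
Implicit Types (g : Y -> R) (y z : Y).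

Lemma dual_unit_sphere_le g z : dual_unit_sphere g -> g z <= `|z|.
Proof.
case=> lin_g [bounded _].
have [->|z0] := eqVneq z 0; first by rewrite (lin_functional0 lin_g) normr0.
have zpos : 0 < `|z| by rewrite normr_gt0.
have unit_z : `|(`|z|)^-1 *: z| <= 1.
  by rewrite normrZ ger0_norm ?invr_ge0 // mulVf ?gt_eqF.
have := le_trans (ler_norm _) (bounded _ unit_z).
by rewrite (lin_functionalZ lin_g) ler_pdivrMl // mulr1.
Qed.

Lemma J_of_norm_dominated g y : y != 0 -> lin_functional g ->
  (forall z, g z <= `|z|) -> g y = `|y| -> J y g.
Proof.
move=> y0 lin_g le_g gy; have ypos : 0 < `|y| by rewrite normr_gt0.
have abs_le z : `|g z| <= `|z|.
  rewrite ler_norml le_g andbT -normrN lerNl -mulN1r -(lin_functionalZ lin_g).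
  by rewrite scaleN1r le_g.
split=> //; split=> //; split=> [z z1|e e0]; first exact: le_trans (abs_le z) z1.
exists (`|y|^-1 *: y); split.
  by rewrite normrZ ger0_norm ?invr_ge0 // mulVf ?gt_eqF.
by rewrite (lin_functionalZ lin_g) gy mulVf ?gt_eqF // normr1; lra.
Qed.

Lemma TEA_scale y z s t : TEA y z -> 0 <= s -> 0 <= t -> TEA (s *: y) (t *: z).
Proof.
rewrite /TEA !normrZ => yz s0 t0; rewrite (ger0_norm s0) (ger0_norm t0).
apply/le_anti/andP; split.
  by apply: le_trans (ler_normD _ _) _; rewrite !normrZ !ger0_norm.
wlog st : y z s t yz s0 t0 / s <= t.
  move=> sym; have [|ts] := lerP s t; first exact: sym.
  rewrite addrC [s *: y + _]addrC; apply: sym => //; last exact: ltW.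
  by rewrite addrC yz addrC.
have split_tyz : t *: (y + z) = (s *: y + t *: z) + (t - s) *: y.
  by rewrite scalerBl scalerDr addrAC addrCA subrr addr0.
have := ler_normD (s *: y + t *: z) ((t - s) *: y).
rewrite -split_tyz !normrZ !ger0_norm ?subr_ge0 // yz; lra.
Qed.

Lemma J_subset_of_TEA y z e t : TEA y z -> 0 < e -> 0 <= t ->
  J (e *: y + t *: z) `<=` J y.
Proof.
move=> yz e0 t0 g [dg gyz]; split=> //.
have lin_g := dg.1.
move: gyz; rewrite (TEA_scale yz (ltW e0) t0) !normrZ !ger0_norm ?(ltW e0) //.
rewrite (lin_functionalD lin_g) !(lin_functionalZ lin_g) => gyz.
have := dual_unit_sphere_le y dg; have := dual_unit_sphere_le z dg; nra.
Qed.

Lemma TEA_of_J y z g : J y g -> J z g -> TEA y z.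
Proof.
move=> [dg gy] [_ gz]; apply/le_anti/andP; split; first exact: ler_normD.
by have := dual_unit_sphere_le (y + z) dg; rewrite (lin_functionalD dg.1) gy gz.
Qed.

End DualUnitSphere.

Section HahnBanach.
Variables (R : realType) (Y : normedModType R).
Implicit Types (M : set Y) (f : Y -> R) (y z : Y).

Definition is_subspace M := M 0 /\ forall a u v, M u -> M v -> M (a *: u + v).

Definition dominated_on M f :=
  (forall a u v, M u -> M v -> f (a *: u + v) = a * f u + f v) /\
  (forall u, M u -> f u <= `|u|).

Definition adjoin M z : set Y := [set w | exists m a, M m /\ w = m + a *: z].

Definition adjoins M (zs : seq Y) : set Y := foldr (fun z N => adjoin N z) M zs.

Lemma is_subspaceZ M a u : is_subspace M -> M u -> M (a *: u).
Proof. by case=> M0 Ml Mu; rewrite -[_ *: _]addr0; apply: Ml. Qed.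

Lemma is_subspaceD M u v : is_subspace M -> M u -> M v -> M (u + v).
Proof. by case=> _ Ml Mu Mv; rewrite -[u]scale1r; apply: Ml. Qed.

Lemma is_subspace_sum M (I : Type) (r : seq I) (P : pred I) (G : I -> Y) :
  is_subspace M -> (forall i, P i -> M (G i)) -> M (\sum_(i <- r | P i) G i).
Proof.
move=> sM MG; apply: big_ind => //; first exact: sM.1.
by move=> u v; apply: is_subspaceD.
Qed.

Lemma adjoin_subspace M z : is_subspace M -> is_subspace (adjoin M z).
Proof.
case=> M0 Ml; split; first by exists 0, 0; rewrite scale0r addr0.
move=> a u v [m1 [a1 [Mm1 ->]]] [m2 [a2 [Mm2 ->]]].
exists (a *: m1 + m2), (a * a1 + a2); split; first exact: Ml.
by rewrite scalerDr scalerDl scalerA addrACA.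
Qed.

Lemma sub_adjoin M z : M `<=` adjoin M z.
Proof. by move=> m Mm; exists m, 0; rewrite scale0r addr0. Qed.

Lemma adjoin_id M z : M 0 -> adjoin M z z.
Proof. by exists 0, 1; rewrite scale1r add0r. Qed.

Lemma adjoin_coord_uniq M z m1 m2 a1 a2 : is_subspace M -> ~ M z ->
  M m1 -> M m2 -> m1 + a1 *: z = m2 + a2 *: z -> a1 = a2 /\ m1 = m2.
Proof.
move=> sM Mz Mm1 Mm2 e.
suff a12 : a1 = a2 by split=> //; move: e; rewrite a12 => /addIr.
apply: contrapT => /eqP; rewrite -subr_eq0 => a12; apply: Mz.
have diff : (a1 - a2) *: z = m2 - m1.
  by rewrite scalerBl; apply: (addrI m1); rewrite addrA e addrK addrCA subrr addr0.
rewrite -[z](scalerK a12) diff; apply: is_subspaceZ => //.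
by rewrite addrC -scaleN1r; apply: sM.2 => //.
Qed.

Lemma dominated_on_sub M N f : N `<=` M -> dominated_on M f -> dominated_on N f.
Proof. by move=> NM [lin_f le_f]; split=> [a u v Nu Nv|u Nu]; auto. Qed.

Lemma dominated_on0 M f : is_subspace M -> dominated_on M f -> f 0 = 0.
Proof.
case=> M0 _ [lin_f _]; have := lin_f 1 0 0 M0 M0.
by rewrite scale1r addr0 mul1r; lra.
Qed.

Lemma dominated_onZ M f a u : is_subspace M -> dominated_on M f -> M u ->
  f (a *: u) = a * f u.
Proof.
move=> sM df Mu; have := df.1 a u 0 Mu sM.1.
by rewrite addr0 (dominated_on0 sM df) addr0.
Qed.

Lemma adjoin_extension M f z c : is_subspace M -> ~ M z ->
  exists f', forall m a, M m -> f' (m + a *: z) = f m + a * c.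
Proof.
move=> sM Mz.
suff /choice[f' f'E] : forall w, exists r : R,
    forall m a, M m -> w = m + a *: z -> r = f m + a * c.
  by exists f' => m a Mm; exact: f'E.
move=> w; have [[m [a [Mm ->]]]|wNM] := pselect (adjoin M z w).
  exists (f m + a * c) => m' a' Mm' e.
  by have [-> ->] := adjoin_coord_uniq sM Mz Mm Mm' e.
by exists 0 => m a Mm ew; exfalso; apply: wNM; exists m, a.
Qed.

Lemma dominated_adjoin_value M f z c :
  is_subspace M -> dominated_on M f -> ~ M z ->
  (forall m, M m -> f m - `|m - z| <= c) ->
  (forall m, M m -> c <= `|m + z| - f m) ->
  exists f', [/\ dominated_on (adjoin M z) f', (forall m, M m -> f' m = f m) &
                 f' z = c].
Proof.
move=> sM df Mz c_ge c_le; have [f' f'E] := adjoin_extension f c sM Mz.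
have f'M m : M m -> f' m = f m.
  by move=> Mm; have := f'E m 0 Mm; rewrite scale0r addr0 mul0r addr0.
exists f'; split=> //; last first.
  have := f'E 0 1 sM.1.
  by rewrite scale1r add0r mul1r (dominated_on0 sM df) add0r.
split.
  move=> a u v [m1 [a1 [Mm1 ->]]] [m2 [a2 [Mm2 ->]]].
  have -> : a *: (m1 + a1 *: z) + (m2 + a2 *: z) =
            (a *: m1 + m2) + (a * a1 + a2) *: z.
    by rewrite scalerDr scalerDl scalerA addrACA.
  rewrite !f'E ?df.1 //; last exact: sM.2.
  ring.
move=> _ [m [a [Mm ->]]]; rewrite f'E //.
have [a0|a0|->] := ltrgtP a 0.
- have na_pos : 0 < - a by rewrite oppr_gt0.
  have := c_ge _ (is_subspaceZ (- a)^-1 sM Mm).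
  rewrite (dominated_onZ _ sM df Mm).
  have -> : (- a)^-1 *: m - z = (- a)^-1 *: (m + a *: z).
    by rewrite scalerDr scalerA invrN mulNr mulVf ?scaleN1r // ltr0_neq0.
  rewrite normrZ ger0_norm ?invr_ge0 ?(ltW na_pos) //.
  by rewrite -mulrBr ler_pdivrMl //; lra.
- have := c_le _ (is_subspaceZ a^-1 sM Mm).
  rewrite (dominated_onZ _ sM df Mm).
  have -> : a^-1 *: m + z = a^-1 *: (m + a *: z).
    by rewrite scalerDr scalerA mulVf ?lt0r_neq0 // scale1r.
  rewrite normrZ ger0_norm ?invr_ge0 ?(ltW a0) //.
  by rewrite -mulrBr ler_pdivlMl //; lra.
- by rewrite scale0r addr0 mul0r addr0; exact: df.2.
Qed.

Lemma dominated_adjoin M f z : is_subspace M -> dominated_on M f ->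
  exists f', dominated_on (adjoin M z) f' /\ (forall m, M m -> f' m = f m).
Proof.
move=> sM df; have [Mz|Mz] := pselect (M z).
  exists f; split=> //; apply: dominated_on_sub df => _ [m [a [Mm ->]]].
  by rewrite addrC; apply: sM.2.
have below_above m m' : M m -> M m' -> f m - `|m - z| <= `|m' + z| - f m'.
  move=> Mm Mm'; have := df.2 _ (is_subspaceD sM Mm Mm').
  have := df.1 1 m m' Mm Mm'; rewrite scale1r mul1r => ->.
  have := ler_normD (m - z) (m' + z); rewrite addrACA addNr addr0; lra.
pose A := [set f m - `|m - z| | m in M].
have A_ub : has_ubound A.
  by exists (`|0 + z| - f 0) => _ [m Mm <-]; exact: below_above m 0 Mm sM.1.
have sup_ge m : M m -> f m - `|m - z| <= sup A.
  by move=> Mm; apply: (ub_le_sup A_ub); exists m.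
have sup_le m' : M m' -> sup A <= `|m' + z| - f m'.
  move=> Mm'; apply: ge_sup; first by exists (f 0 - `|0 - z|), 0 => //; exact: sM.1.
  by move=> _ [m Mm <-]; apply: below_above.
have [f' [df' f'M _]] := dominated_adjoin_value sM df Mz sup_ge sup_le.
by exists f'.
Qed.

Lemma adjoins_subspace M zs : is_subspace M -> is_subspace (adjoins M zs).
Proof. by move=> sM; elim: zs => //= z zs; apply: adjoin_subspace. Qed.

Lemma sub_adjoins M zs : M `<=` adjoins M zs.
Proof. by elim: zs => //= z zs IH m /IH; apply: sub_adjoin. Qed.

Lemma mem_adjoins M zs z : is_subspace M -> z \in zs -> adjoins M zs z.
Proof.
move=> sM; elim: zs => //= z' zs IH; rewrite in_cons => /orP [/eqP ->|/IH].
  exact/adjoin_id/(adjoins_subspace zs sM).1.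
exact: sub_adjoin.
Qed.

Lemma dominated_adjoins M f zs : is_subspace M -> dominated_on M f ->
  exists f', dominated_on (adjoins M zs) f' /\ (forall m, M m -> f' m = f m).
Proof.
move=> sM df; elim: zs => [|z zs [f1 [df1 f1M]]] /=; first by exists f.
have [f' [df' f'f1]] := dominated_adjoin z (adjoins_subspace zs sM) df1.
by exists f'; split=> // m Mm; rewrite f'f1 ?f1M //; apply: sub_adjoins.
Qed.

End HahnBanach.

Lemma norming_functional (R : realType) (Y : normedModType R) (y : Y) :
  finite_dim Y -> y != 0 -> exists g, J y g.
Proof.
case=> n [phi [psi _ psiK]] y0.
have s0 : is_subspace [set 0 : Y].
  by split=> // a u v -> ->; rewrite scaler0 addr0.
have d0 : dominated_on [set 0 : Y] (fun=> 0).
  by split=> [a u v _ _|u _]; rewrite ?mulr0 ?addr0.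
have [f1 [df1 _ f1y]] : exists f1, [/\ dominated_on (adjoin [set 0] y) f1,
    (forall m, [set 0] m -> f1 m = 0) & f1 y = `|y|].
  apply: dominated_adjoin_value => //= [/eqP|m ->|m ->].
  - by rewrite (negbTE y0).
  - by rewrite !sub0r normrN; have := normr_ge0 y; lra.
  - by rewrite add0r subr0.
have sM := adjoin_subspace y s0.
pose basis := [seq phi 'e_i | i <- enum 'I_n].
have [g [[lin_g le_g] gM]] := dominated_adjoins basis sM df1.
have cover w : adjoins (adjoin [set 0] y) basis w.
  rewrite -(psiK w) (row_sum_delta (psi w)) linear_sum.
  apply: is_subspace_sum (adjoins_subspace basis sM) _ => i _.
  rewrite linearZ; apply: is_subspaceZ (adjoins_subspace basis sM) _.
  by apply: mem_adjoins sM _; apply/map_f/mem_enum.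
exists g; apply: (J_of_norm_dominated y0) => [a u v|z|].
- exact: lin_g.
- exact: le_g.
- by rewrite gM ?f1y //; exact: adjoin_id.
Qed.

Lemma J_nonempty (R : realType) (Y : normedModType R) (y0 y : Y) :
  finite_dim Y -> y0 != 0 -> exists g, J y g.
Proof.
move=> dimY y00; have [->|y_neq0] := eqVneq y 0; last exact: norming_functional.
have [g [dg _]] := norming_functional dimY y00.
by exists g; split; rewrite ?(lin_functional0 dg.1) ?normr0.
Qed.

Section ConvexCombination.
Variables (R : realFieldType) (X : lmodType R) (F : set X).
Hypothesis convexF : forall x1 x2 t, F x1 -> F x2 -> 0 <= t <= 1 ->
  F ((1 - t) *: x1 + t *: x2).

Lemma convex_comb k (x : 'I_k -> X) (w : 'I_k -> R) :
  (forall i, F (x i)) -> (forall i, 0 <= w i) -> \sum_i w i = 1 ->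
  F (\sum_i w i *: x i).
Proof.
elim: k x w => [|k IH] x w Fx w_ge0.
  by rewrite big_ord0 => /eqP; rewrite eq_sym oner_eq0.
rewrite !big_ord_recl; set t := \sum_(i < k) _ => w_sum.
have t_ge0 : 0 <= t by apply: sumr_ge0 => i _.
have -> : w ord0 = 1 - t by rewrite -w_sum addrK.
have [t0|t_neq0] := eqVneq t 0.
  rewrite big1 ?t0 ?subr0 ?scale1r ?addr0 // => i _.
  by rewrite (psumr_eq0P (fun i _ => w_ge0 (lift ord0 i)) t0) ?scale0r.
have t_gt0 : 0 < t by rewrite lt0r t_neq0.
have -> : \sum_(i < k) w (lift ord0 i) *: x (lift ord0 i) =
          t *: \sum_(i < k) (w (lift ord0 i) / t) *: x (lift ord0 i).
  by rewrite scaler_sumr; apply: eq_bigr => i _; rewrite scalerA mulrC divfK.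
apply: convexF; first exact: Fx.
  apply: IH => [i|i|]; [exact: Fx | exact: divr_ge0 | by rewrite -mulr_suml mulfV].
by rewrite t_ge0 /=; have := w_ge0 ord0; lra.
Qed.

Lemma barycenter_decomposition (Y : lmodType R) (T : {linear X -> Y}) k
    (x : 'I_k -> X) (c : 'I_k -> R) v :
  (0 < k)%N -> (forall i, F (x i)) -> T v = \sum_i c i *: T (x i) ->
  exists e t z, [/\ 0 < e, 0 <= t, F z &
    T (\sum_i k%:R^-1 *: x i) = e *: T v + t *: T z].
Proof.
move=> k_gt0 Fx Tv; have k_pos : 0 < k%:R :> R by rewrite ltr0n.
pose B := 1 + \sum_i `|c i|.
have c_lt_B i : c i < B.
  rewrite /B (bigD1 i) //=.
  have : 0 <= \sum_(j < k | j != i) `|c j| by apply: sumr_ge0.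
  have := ler_norm (c i); lra.
have B_gt0 : 0 < B.
  have : 0 <= \sum_i `|c i| by apply: sumr_ge0.
  rewrite /B; lra.
(* [e] is small enough that all coefficients [k^-1 - e c i] stay positive *)
pose e := (k%:R * B)^-1.
have e_gt0 : 0 < e by rewrite invr_gt0 mulr_gt0.
pose w i := k%:R^-1 - e * c i.
have w_gt0 i : 0 < w i.
  have eB : e * B = k%:R^-1 by rewrite /e invfM -mulrA mulVf ?mulr1 ?gt_eqF.
  by rewrite subr_gt0 -eB ltr_pM2l.
pose t := \sum_i w i.
have t_gt0 : 0 < t.
  apply: lt_le_trans (w_gt0 (Ordinal k_gt0)) _.
  by rewrite /t (bigD1 (Ordinal k_gt0)) //= lerDl sumr_ge0 // => i _; exact: ltW.
exists e, t, (\sum_i (w i / t) *: x i); split=> //; first exact: ltW.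
  apply: convex_comb => [i|i|]; first exact: Fx.
    by apply: divr_ge0; exact: ltW.
  by rewrite -mulr_suml mulfV ?gt_eqF.
rewrite Tv !linear_sum -big_split; apply: eq_bigr => i _ /=.
rewrite !linearZ /= !scalerA -scalerDl divfK ?gt_eqF //.
by congr (_ *: _); rewrite /w; ring.
Qed.

End ConvexCombination.

Lemma span_map_coef (K : fieldType) (vT : vectType K) (A : Type) (g : A -> vT)
    (s : seq A) (a0 : A) (v : vT) :
  v \in <<map g s>>%VS ->
  exists c : 'I_(size s) -> K, v = \sum_i c i *: g (nth a0 s i).
Proof.
elim: s v => [|a s IH] v /=.
  by rewrite span_nil memv0 => /eqP ->; exists (fun=> 0); rewrite big_ord0.
rewrite span_cons => /memv_addP [_ /vlineP [b ->] [w /IH [c ->] ->]].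
exists (fun i : 'I_(size s).+1 => if unlift ord0 i is Some j then c j else b).
rewrite big_ord_recl unlift_none /=; congr (_ + _); apply: eq_bigr => i _.
by rewrite liftK.
Qed.

(* A maximal-dimensional span of images of finitely many points of [F] contains
   the image of every point of [F]. *)
Lemma finite_spanning_family (R : realType) (X : Type) (Y : normedModType R)
    (f : X -> Y) (F : set X) (x0 : X) :
  finite_dim Y -> F x0 ->
  exists s : seq X, [/\ (0 < size s)%N, forall i : 'I_(size s), F (nth x0 s i) &
    forall v, F v ->
      exists c : 'I_(size s) -> R, f v = \sum_i c i *: f (nth x0 s i)].
Proof.
case=> n [phi [psi _ psiK]] Fx0.
pose V s : {vspace 'rV[R]_n} := <<map (psi \o f) s>>%VS.
pose P k := `[< exists s, [/\ (0 < size s)%N,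
  forall i : 'I_(size s), F (nth x0 s i) & \dim (V s) = k] >].
have P_ex : exists k, P k.
  by exists (\dim (V [:: x0])); apply/asboolP; exists [:: x0]; split=> // -[[|]].
have P_ub k : P k -> (k <= \dim {: 'rV[R]_n})%N.
  by move=> /asboolP [s [_ _ <-]]; apply/dimvS/subvf.
have [k /asboolP [s [s_gt0 Fs dimVs]] k_max] := ex_maxnP P_ex P_ub.
exists s; split=> // v Fv.
have P_vs : P (\dim (V (v :: s))).
  apply/asboolP; exists (v :: s); split=> // -[[|j] j_lt] //=.
  exact: (Fs (Ordinal (j_lt : (j < size s)%N))).
have V_eq : V s = V (v :: s).
  apply/eqP; rewrite eqEdim dimVs (k_max _ P_vs) andbT.
  by apply: sub_span => y y_in; rewrite /= in_cons y_in orbT.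
have /(span_map_coef x0) [c psi_fv] : psi (f v) \in V s.
  by rewrite V_eq; apply: memv_span; rewrite /= in_cons eqxx.
exists c; rewrite -[f v]psiK psi_fv linear_sum; apply: eq_bigr => i _.
by rewrite linearZ /= psiK.
Qed.

Theorem mainTheorem12 (R : realType) (X Y : normedModType R)
  (hX : finite_dim X) (hY : finite_dim Y)
  (T : {linear X -> Y}) (F : set X)
  (hF : is_face F) (hTF : exists x, F x /\ T x != 0) :
  (forall x y, F x -> F y -> TEA (T x) (T y)) <->
  (exists u, F u /\ forall v, F v -> T v != 0 -> J (T u) `<=` J (T v)).
Proof.
have [x0 [Fx0 Tx0]] := hTF; have [_ _ convexF _] := hF.
split=> [TEA_F | [u [Fu Ju]] x y Fx Fy].
- have [s [s_gt0 Fs spanT]] := finite_spanning_family T hY Fx0.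
  exists (\sum_(i < size s) (size s)%:R^-1 *: nth x0 s i); split.
    apply: (convex_comb convexF (w := fun=> (size s)%:R^-1)) Fs _ _ => [i|].
      by rewrite invr_ge0.
    rewrite sumr_const card_ord -[_ *+ size s]mulr_natr.
    by rewrite mulVf // pnatr_eq0 -lt0n.
  move=> v Fv _; have [c Tv] := spanT v Fv.
  have [e [t [z [e_gt0 t_ge0 Fz ->]]]] :=
    barycenter_decomposition convexF s_gt0 Fs Tv.
  exact: J_subset_of_TEA (TEA_F v z Fv Fz) e_gt0 t_ge0.
- have [g Jg] := J_nonempty (T u) hY Tx0.
  have JTg v : F v -> J (T v) g.
    move=> Fv; have [Tv0|Tv_neq0] := eqVneq (T v) 0.
      by split; [exact: Jg.1 | rewrite Tv0 normr0 (lin_functional0 Jg.1.1)].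
    exact: Ju v Fv Tv_neq0 g Jg.
  exact: TEA_of_J (JTg x Fx) (JTg y Fy).
Qed.
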